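(* There exists an $HS(3,K_4^{(3)}+e;15,5)$.
   Context: $K_4^{(3)}+e$ denotes the 3-uniform hypergraph with vertex set $\{1,2,3,4,5\}$ and edge set $\{\{1,2,3\},\{1,2,4\},\{1,3,4\},\{2,3,4\},\{3,4,5\}\}$. An $HS(3,K_4^{(3)}+e;v,s)$ is a collection of hypergraphs (blocks) on subsets of a $v$-set $V$, each isomorphic to $K_4^{(3)}+e$, whose edge sets partition the set of all 3-subsets of $V$ that are not contained in a fixed $s$-subset of $V$ (the hole). *)

From mathcomp Require Import all_boot.
Set Implicit Arguments. Unset Strict Implicit. Unset Printing Implicit Defensive.

(* K_4^{(3)}+e on vertex set 'I_5 (vertex i+1 of the paper is i here):
   edges {1,2,3},{1,2,4},{1,3,4},{2,3,4},{3,4,5}. *)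
Definition K4e_edges : seq {set 'I_5} :=
  [:: [set (inord 0 : 'I_5); inord 1; inord 2];
      [set (inord 0 : 'I_5); inord 1; inord 3];
      [set (inord 0 : 'I_5); inord 2; inord 3];
      [set (inord 1 : 'I_5); inord 2; inord 3];
      [set (inord 2 : 'I_5); inord 3; inord 4]].

Definition block_edges (V : finType) (f : {ffun 'I_5 -> V}) : seq {set V} :=
  map (fun e : {set 'I_5} => [set f x | x in e]) K4e_edges.

(* B is an HS(3, K_4^{(3)}+e; |V|, |H|) with hole H: the (multiset of) edge
   sets of the blocks partition the 3-subsets of V not contained in H. *)
Definition is_HS_K4e (V : finType) (H : {set V}) (B : seq {ffun 'I_5 -> V}) : Prop :=
  (forall f, f \in B -> injective f) /\
  (forall T : {set V},
     count (pred1 T) (flatten (map (@block_edges V) B)) =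
     (if (#|T| == 3) && ~~ (T \subset H) then 1 else 0)).

From mathcomp Require Import all_boot.

Set Implicit Arguments.
Unset Strict Implicit.
Unset Printing Implicit Defensive.

(* The design is exhibited explicitly: 89 blocks on {0, ..., 14} with hole
   {0, 1, 3, 7, 14}. Blocks and triples are encoded by lists of naturals, and
   the decomposition property reduces to a finite check on these lists: every
   triple of distinct vertices occurs, up to permutation, exactly once among the
   5 * 89 = 455 - 10 edge triples, unless it lies in the hole. *)

Section NatSets.

Variable n : nat.

Definition nset (s : seq nat) : {set 'I_n.+1} := [set x | val x \in s].

Definition below (s : seq nat) : bool := all (fun x => x < n.+1) s.

Lemma nset_enum (T : {set 'I_n.+1}) : nset (map val (enum T)) = T.
Proof. by apply/setP => x; rewrite inE (mem_map val_inj) mem_enum. Qed.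

Lemma below_enum (T : {set 'I_n.+1}) : below (map val (enum T)).
Proof. by rewrite /below; apply/allP => _ /mapP[x _ ->]; apply: ltn_ord. Qed.

Lemma card_nset s : uniq s -> below s -> #|nset s| = size s.
Proof.
rewrite /below => Us /allP Bs.
have -> : nset s = [set x in pmap insub s].
  by apply/setP => x; rewrite !inE mem_pmap_sub.
rewrite cardsE (card_uniqP _) ?pmap_sub_uniq // size_pmap_sub.
by apply/eqP; rewrite -all_count; apply/allP.
Qed.

Lemma subset_nset s t : below s -> (nset s \subset nset t) = all (mem t) s.
Proof.
rewrite /below => /allP Bs; apply/subsetP/allP => [sub i is_ | sub x].
  by have := sub (Ordinal (Bs i is_)); rewrite !inE /= => ->.
by rewrite !inE => /sub.
Qed.

Lemma eq_nset s t : uniq s -> uniq t -> below s -> below t -> size t <= size s ->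
  (nset s == nset t) = all (mem t) s.
Proof.
by move=> Us Ut Bs Bt St; rewrite eqEcard subset_nset // !card_nset // St andbT.
Qed.

Lemma card3_nset (T : {set 'I_n.+1}) : #|T| = 3 ->
  exists a b c, [/\ uniq [:: a; b; c], below [:: a; b; c] & T = nset [:: a; b; c]].
Proof.
have Us : uniq (map val (enum T)) by rewrite (map_inj_uniq val_inj) enum_uniq.
rewrite -(nset_enum T) card_nset ?below_enum //.
move: Us (below_enum T); case: (map val (enum T)) => [|a [|b [|c [|d r]]]] // U B _.
by exists a, b, c.
Qed.

End NatSets.

Section Certificate.

Variable n : nat.

Definition block_of (l : seq nat) : {ffun 'I_5 -> 'I_n.+1} :=
  [ffun i : 'I_5 => inord (nth 0 l i)].

Definition K4e_index_triples : seq (seq nat) :=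
  [:: [:: 0; 1; 2]; [:: 0; 1; 3]; [:: 0; 2; 3]; [:: 1; 2; 3]; [:: 2; 3; 4]].

Definition K4e_triples (l : seq nat) : seq (seq nat) :=
  [seq [seq nth 0 l i | i <- e] | e <- K4e_index_triples].

Lemma nth_below l i : below n l -> nth 0 l i < n.+1.
Proof.
move=> /allP Bl; have [il | li] := ltnP i (size l); first exact/Bl/mem_nth.
by rewrite nth_default.
Qed.

Lemma block_of_inj l : size l = 5 -> uniq l -> below n l -> injective (block_of l).
Proof.
move=> Sl Ul Bl i j /(congr1 val); rewrite !ffunE /= !inordK ?nth_below //.
by move/eqP; rewrite nth_uniq ?Sl // => /eqP/val_inj.
Qed.

Lemma imset_block_of3 l i j k : below n l -> i < 5 -> j < 5 -> k < 5 ->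
  [set block_of l x | x in [set (inord i : 'I_5); inord j; inord k]] =
  nset n [:: nth 0 l i; nth 0 l j; nth 0 l k].
Proof.
move=> Bl ilt jlt klt; rewrite !imsetU !imset_set1 !ffunE !inordK //.
by apply/setP => x; rewrite !inE -!(inj_eq val_inj) /= !inordK ?nth_below // orbA.
Qed.

Lemma block_edges_of l : below n l -> block_edges (block_of l) = map (nset n) (K4e_triples l).
Proof. by move=> Bl; rewrite /block_edges /= !imset_block_of3. Qed.

Lemma K4e_triples_uniq l : size l = 5 -> uniq l -> all uniq (K4e_triples l).
Proof.
move=> Sl Ul; apply/allP => _ /mapP[e eK ->].
have /andP[Ue /allP Be] : uniq e && all (fun i => i < 5) e by move: e eK; apply/allP.
rewrite map_inj_in_uniq // => i j /Be ilt /Be jlt /eqP.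
by rewrite nth_uniq ?Sl // => /eqP.
Qed.

Lemma K4e_triples_below l : below n l -> all (below n) (K4e_triples l).
Proof.
move=> Bl; apply/allP => _ /mapP[e _ ->].
by apply/allP => _ /mapP[i _ ->]; apply: nth_below.
Qed.

Lemma K4e_triples_size l : all (fun t => size t == 3) (K4e_triples l).
Proof. by []. Qed.

Definition all_triples (P : nat -> nat -> nat -> bool) : bool :=
  all (fun a => all (fun b => all (P a b) (iota 0 n.+1)) (iota 0 n.+1)) (iota 0 n.+1).

Lemma all_triplesP P a b c : all_triples P -> below n [:: a; b; c] -> P a b c.
Proof.
have iota_below x : x < n.+1 -> x \in iota 0 n.+1 by rewrite mem_iota.
move=> /allP PA /and4P[/iota_below ai /iota_below bi /iota_below ci _].
by move: (PA a ai) => /allP/(_ b bi)/allP/(_ c ci).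
Qed.

Definition edge_triples (blocks : seq (seq nat)) : seq (seq nat) :=
  flatten (map K4e_triples blocks).

Definition HS_certificate (hole : seq nat) (blocks : seq (seq nat)) : bool :=
  all (fun l => [&& size l == 5, uniq l & below n l]) blocks &&
  all_triples (fun a b c => uniq [:: a; b; c] ==>
    (count (fun t => all (mem t) [:: a; b; c]) (edge_triples blocks)
       == ~~ all (mem hole) [:: a; b; c])).

Theorem is_HS_K4e_of_certificate hole blocks :
  HS_certificate hole blocks -> is_HS_K4e (nset n hole) (map block_of blocks).
Proof.
case/andP => /allP blocksP tripleP.
have edgesE : flatten (map (@block_edges _) (map block_of blocks))
              = map (nset n) (edge_triples blocks).
  rewrite /edge_triples map_flatten -!map_comp; congr flatten.
  by apply/eq_in_map => l /blocksP /and3P[_ _ Bl] /=; apply: block_edges_of.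
have edgeP t : t \in edge_triples blocks -> [/\ uniq t, below n t & size t = 3].
  move=> /flatten_mapP[l /blocksP /and3P[/eqP Sl Ul Bl] tl]; split.
  - exact: (allP (K4e_triples_uniq Sl Ul)).
  - exact: (allP (K4e_triples_below Bl)).
  - exact/eqP/(allP (K4e_triples_size l)).
split => [f /mapP[l /blocksP /and3P[/eqP Sl Ul Bl] ->] | T].
  exact: block_of_inj.
rewrite edgesE; have [/card3_nset[a [b [c [Uabc Babc ->]]]] | T3] := eqVneq #|T| 3.
  rewrite subset_nset // andTb count_map.
  rewrite (eq_in_count (a2 := fun t : seq nat => all (mem t) [:: a; b; c])); last first.
    by move=> t /edgeP[Ut Bt St] /=; rewrite eq_sym eq_nset // St.
  have /implyP/(_ Uabc)/eqP -> := all_triplesP tripleP Babc.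
  by case: all.
apply/count_memPn/mapP => -[t /edgeP[Ut Bt St] Tt].
by move/eqP: T3; rewrite Tt card_nset.
Qed.

End Certificate.

Definition hs15_hole : seq nat := [:: 0; 1; 3; 7; 14].

Definition hs15_blocks : seq (seq nat) :=
  [::
   [:: 2; 11; 5; 8; 14]; [:: 2; 12; 6; 8; 13]; [:: 2; 9; 0; 7; 12]; [:: 7; 11; 1; 5; 3]; [:: 3; 7; 6; 10; 11];
   [:: 5; 8; 3; 10; 14]; [:: 2; 10; 5; 13; 7]; [:: 1; 6; 8; 11; 4]; [:: 5; 7; 3; 9; 10]; [:: 2; 4; 8; 14; 3];
   [:: 4; 6; 8; 10; 1]; [:: 2; 13; 1; 14; 4]; [:: 5; 14; 3; 12; 8]; [:: 0; 11; 5; 10; 12]; [:: 5; 10; 1; 14; 11];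
   [:: 7; 10; 8; 9; 2]; [:: 4; 8; 0; 12; 11]; [:: 1; 11; 4; 10; 13]; [:: 3; 13; 6; 12; 9]; [:: 0; 13; 6; 7; 14];
   [:: 1; 6; 9; 14; 3]; [:: 6; 10; 5; 9; 11]; [:: 3; 8; 0; 11; 14]; [:: 9; 12; 2; 3; 14]; [:: 3; 13; 4; 14; 7];
   [:: 6; 7; 4; 9; 10]; [:: 7; 9; 12; 14; 2]; [:: 6; 14; 2; 10; 7]; [:: 6; 10; 1; 13; 12]; [:: 2; 12; 1; 11; 13];
   [:: 10; 11; 7; 14; 5]; [:: 5; 6; 3; 4; 0]; [:: 6; 14; 3; 11; 7]; [:: 8; 14; 10; 12; 4]; [:: 5; 9; 0; 12; 13];
   [:: 2; 5; 0; 3; 12]; [:: 8; 11; 9; 14; 4]; [:: 1; 5; 9; 13; 3]; [:: 0; 5; 1; 4; 6]; [:: 9; 11; 10; 12; 2];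
   [:: 4; 9; 2; 11; 14]; [:: 10; 13; 9; 14; 0]; [:: 2; 10; 1; 9; 7]; [:: 6; 14; 4; 12; 2]; [:: 9; 14; 2; 5; 4];
   [:: 5; 14; 4; 11; 7]; [:: 8; 9; 3; 6; 0]; [:: 3; 5; 11; 13; 2]; [:: 9; 13; 7; 11; 0]; [:: 9; 12; 1; 4; 7];
   [:: 6; 12; 0; 10; 9]; [:: 8; 13; 0; 5; 14]; [:: 6; 9; 0; 11; 2]; [:: 0; 6; 2; 4; 10]; [:: 4; 5; 7; 10; 1];
   [:: 5; 6; 13; 14; 0]; [:: 10; 14; 0; 4; 7]; [:: 10; 11; 2; 3; 6]; [:: 5; 13; 4; 12; 7]; [:: 5; 8; 1; 12; 14];
   [:: 9; 11; 1; 3; 13]; [:: 8; 9; 12; 13; 2]; [:: 11; 12; 7; 8; 0]; [:: 11; 13; 12; 14; 0]; [:: 4; 8; 3; 7; 12];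
   [:: 5; 8; 4; 9; 3]; [:: 6; 7; 1; 12; 0]; [:: 11; 12; 3; 4; 10]; [:: 6; 9; 2; 13; 0]; [:: 11; 12; 5; 6; 0];
   [:: 8; 10; 11; 13; 0]; [:: 2; 4; 1; 3; 6]; [:: 7; 13; 8; 14; 1]; [:: 6; 11; 2; 7; 3]; [:: 3; 13; 0; 10; 7];
   [:: 4; 13; 2; 7; 14]; [:: 8; 10; 0; 2; 14]; [:: 8; 14; 0; 6; 1]; [:: 2; 7; 1; 8; 3]; [:: 10; 12; 7; 13; 1];
   [:: 8; 9; 0; 1; 11]; [:: 3; 12; 1; 10; 0]; [:: 5; 7; 2; 12; 0]; [:: 6; 13; 4; 11; 0]; [:: 6; 8; 5; 7; 0];
   [:: 4; 13; 0; 9; 3]; [:: 5; 6; 1; 2; 0]; [:: 2; 8; 3; 13; 7]; [:: 4; 8; 1; 13; 0]].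

Lemma hs15_certificate : HS_certificate 14 hs15_hole hs15_blocks.
Proof. by vm_compute. Qed.

Theorem lemma3p7 :
  exists (H : {set 'I_15}) (B : seq {ffun 'I_5 -> 'I_15}),
    #|H| = 5 /\ is_HS_K4e H B.
Proof.
exists (nset 14 hs15_hole), (map (block_of 14) hs15_blocks); split.
  by rewrite card_nset.
exact: is_HS_K4e_of_certificate hs15_certificate.
Qed.
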